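(* Let $G$ be a graph of order $n$ with vertex degrees $d_1\ge d_2\ge\cdots\ge d_n$. Then $$\mathcal E(G)\le 2\sum_{i=1}^h d_i,$$ where $h=\min\{\nu^+(G),\nu^-(G)\}$.
   Context: All graphs are finite and simple. $\mathcal E(G)$ is the sum of absolute values of the adjacency eigenvalues of $G$; $\nu^+(G)$ and $\nu^-(G)$ are the numbers of positive and negative adjacency eigenvalues. *)

From mathcomp Require Import all_boot all_order all_algebra all_field.
Set Implicit Arguments. Unset Strict Implicit. Unset Printing Implicit Defensive.
Import Order.TTheory GRing.Theory Num.Theory.
Local Open Scope ring_scope.

Definition simple_graph (n : nat) (e : rel 'I_n) : Prop :=
  symmetric e /\ irreflexive e.

Definition adjmx (n : nat) (e : rel 'I_n) : 'M[algC]_n :=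
  \matrix_(i, j) (e i j)%:R.

(* The adjacency eigenvalues, listed with algebraic multiplicity:
   a list r with char_poly A = lead_coef * \prod_(z <- r) ('X - z). *)
Definition spectrum (n : nat) (e : rel 'I_n) : seq algC :=
  sval (closed_field_poly_normal (char_poly (adjmx e))).

Definition energy (n : nat) (e : rel 'I_n) : algC :=
  \sum_(l <- spectrum e) `|l|.

Definition nu_pos (n : nat) (e : rel 'I_n) : nat :=
  count (fun l => 0 < l) (spectrum e).
Definition nu_neg (n : nat) (e : rel 'I_n) : nat :=
  count (fun l => l < 0) (spectrum e).

Definition deg (n : nat) (e : rel 'I_n) (i : 'I_n) : nat := #|[set j | e i j]|.

Definition degseq (n : nat) (e : rel 'I_n) : seq nat :=
  sort geq [seq deg e i | i <- enum 'I_n].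

Definition sum_top_degrees (n : nat) (e : rel 'I_n) (h : nat) : nat :=
  sumn (take h (degseq e)).

(* Write A = P^* diag(l) P with P unitary.  For a set S of eigenvalue indices,
   sum_(k in S) l_k = sum_(i,j) A_ij c_ij with c_ij = sum_(k in S) P_ki conj(P_kj),
   and AM-GM gives |c_ij| <= (w_i + w_j) / 2 for the weights
   w_i = sum_(k in S) |P_ki|^2.  As A is symmetric with nonnegative entries,
   |sum_(k in S) l_k| <= sum_i d_i w_i, and since 0 <= w_i <= 1 with
   sum_i w_i = |S|, this is at most the sum of the |S| largest degrees.
   The trace of A is 0, so the energy is twice the sum of the positive
   eigenvalues and also twice minus the sum of the negative ones: bound it
   through whichever of the two index sets is smaller. *)

From mathcomp Require Import all_boot all_order all_algebra all_field.
Set Implicit Arguments. Unset Strict Implicit. Unset Printing Implicit Defensive.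
Import Order.TTheory GRing.Theory Num.Theory.
Local Open Scope ring_scope.
Local Open Scope sesquilinear_scope.

Lemma sum_weighted_le_sum_take (R : numDomainType) (T : eqType) (f : T -> nat)
    (x : T -> R) (s : seq T) (c : nat) :
  sorted (relpre f geq) s -> (forall i, 0 <= x i <= 1) ->
  \sum_(i <- s) x i = c%:R -> (c <= size s)%N ->
  \sum_(i <- s) (f i)%:R * x i <= (\sum_(i <- take c s) f i)%:R.
Proof.
move=> s_sorted x01 sum_x c_le.
have f_tr : transitive (relpre f geq) by move=> j i k /= ij jk; exact: leq_trans jk ij.
have size_H : size (take c s) = c by rewrite size_take_min; exact/minn_idPl.
move: s_sorted sum_x (cat_take_drop c s); rewrite (sorted_pairwise f_tr).
move: (take c s) (drop c s) size_H => H L size_H s_sorted sum_x s_eq; subst s.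
move: s_sorted sum_x; rewrite pairwise_cat !big_cat /= natr_sum.
move=> /and3P[/allrelP H_ge_L _ _] sum_x.
(* [t] separates the values of f on the head H from those on the tail L, and the
   mass of x on L equals the deficit of x on H, so moving it to H can only gain. *)
pose t := (\max_(j <- L) f j)%N.
have f_le_t j : j \in L -> (f j <= t)%N by move=> jL; exact: leq_bigmax_seq.
have t_le_f i : i \in H -> (t <= f i)%N.
  by move=> iH; apply/bigmax_leqP_seq => j jL _; exact: H_ge_L.
have mass_L : \sum_(i <- L) x i = \sum_(i <- H) (1 - x i).
  have sum1_H : \sum_(i <- H) (1 : R) = c%:R by rewrite -size_H -sum1_size natr_sum.
  by rewrite sumrB sum1_H -sum_x addrAC subrr add0r.
have split_H : \sum_(i <- H) (f i)%:R =
    \sum_(i <- H) ((f i)%:R * x i + (f i)%:R * (1 - x i)).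
  by apply: eq_bigr => i _; rewrite -mulrDr addrC subrK mulr1.
rewrite split_H big_split /= lerD2l.
apply: (@le_trans _ _ (t%:R * \sum_(i <- L) x i)).
  rewrite mulr_sumr !big_seq; apply: ler_sum => i iL.
  by rewrite ler_wpM2r ?ler_nat ?f_le_t //; case/andP: (x01 i).
rewrite mass_L mulr_sumr !big_seq; apply: ler_sum => i iH.
by rewrite ler_wpM2r ?ler_nat ?t_le_f // subr_ge0; case/andP: (x01 i).
Qed.

Lemma sum_weighted_le_sum_top (R : numDomainType) (T : finType) (f : T -> nat)
    (x : T -> R) (c : nat) :
  (forall i, 0 <= x i <= 1) -> \sum_i x i = c%:R -> (c <= #|T|)%N ->
  \sum_i (f i)%:R * x i <= (sumn (take c (sort geq [seq f i | i <- enum T])))%:R.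
Proof.
move=> x01 sum_x c_le.
have f_tot : total (relpre f geq) by move=> i j; exact: leq_total.
set s := sort (relpre f geq) (enum T).
have s_enum : perm_eq s (enum T) by rewrite perm_sort.
have sum_s F : \sum_(i <- s) F i = \sum_i F i :> R.
  by rewrite (perm_big _ s_enum) big_enum.
rewrite sort_map -/s -map_take sumnE big_map -sum_s.
apply: sum_weighted_le_sum_take; rewrite ?sum_s //; first exact: sort_sorted.
by rewrite size_sort -cardT.
Qed.

Lemma norm_sum_mul_conj_le (C : numClosedFieldType) (I : finType) (S : {pred I})
    (u v : I -> C) :
  `|\sum_(k in S) u k * (v k)^*| *+ 2 <=
    \sum_(k in S) `|u k| ^+ 2 + \sum_(k in S) `|v k| ^+ 2.
Proof.
rewrite -big_split /=; apply: le_trans (ler_wMn2r 2 (ler_norm_sum _ _ _)) _.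
rewrite -sumrMnl; apply: ler_sum => k _; rewrite normrM norm_conjC.
by rewrite real_leif_mean_square_scaled ?normr_real.
Qed.

Lemma char_poly_similar (R : comUnitRingType) (n : nat) (V B : 'M[R]_n) :
  V \in unitmx -> char_poly (invmx V *m B *m V) = char_poly B.
Proof.
move=> V_unit; rewrite /char_poly /char_poly_mx.
have -> : 'X%:M - map_mx polyC (invmx V *m B *m V) =
    map_mx polyC (invmx V) *m ('X%:M - map_mx polyC B) *m map_mx polyC V.
  rewrite mulmxBr mulmxBl !map_mxM; congr (_ - _).
  rewrite mul_mx_scalar -scalemxAl -map_mxM.
  by rewrite mulVmx // map_mx1 scalemx1.
by rewrite !det_mulmx mulrC mulrA -det_mulmx -map_mxM mulmxV // map_mx1 det1 mul1r.
Qed.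

Section NonnegHermitian.

Variables (n : nat) (A : 'M[algC]_n).
Hypotheses (A_herm : A \is hermsymmx) (A_ge0 : forall i j, 0 <= A i j).

Local Notation P := (spectralmx A).
Local Notation D := (spectral_diag A).

Definition spectral_weight (S : {pred 'I_n}) (i : 'I_n) : algC :=
  \sum_(k in S) `|P k i| ^+ 2.

Lemma spectral_decomposition : A = P ^t* *m diag_mx D *m P.
Proof.
have /orthomx_spectralP {1}-> := hermitian_normalmx A_herm.
by rewrite invmx_unitary // spectral_unitarymx.
Qed.

Lemma spectral_diagE : diag_mx D = P *m A *m P ^t*.
Proof.
have /unitarymxP := spectral_unitarymx A; move: spectral_decomposition.
move: P D => Q E -> Q_unitary.
by rewrite !mulmxA Q_unitary mul1mx -mulmxA Q_unitary mulmx1.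
Qed.

Lemma spectral_diag_real k : D 0 k \is Num.real.
Proof. by apply/mxOverP: k; exact: hermitian_spectral_diag_real. Qed.

Lemma char_poly_spectral : char_poly A = \prod_(k < n) ('X - (D 0 k)%:P).
Proof.
have /orthomx_spectralP {1}-> := hermitian_normalmx A_herm.
rewrite char_poly_similar ?spectral_unit // char_poly_trig ?diag_mx_is_trig //.
by apply: eq_bigr => k _; rewrite mxE eqxx mulr1n.
Qed.

Lemma sum_spectral_diag : \sum_k D 0 k = \tr A.
Proof.
have /unitarymxP/mulmx1C P_unitary := spectral_unitarymx A.
by rewrite -mxtrace_diag spectral_diagE mxtrace_mulC mulmxA P_unitary mul1mx.
Qed.

Lemma nonneg_hermitian_sym i j : A i j = A j i.
Proof.
have /is_hermitianmxP/matrixP/(_ i j) := A_herm.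
by rewrite expr0 scale1r !mxE geC0_conj.
Qed.

Lemma spectral_diag_coord k : D 0 k = \sum_i \sum_j A i j * (P k i * (P k j)^*).
Proof.
have /matrixP/(_ k k) := spectral_diagE; rewrite !mxE eqxx mulr1n => ->.
rewrite exchange_big /=; apply: eq_bigr => j _; rewrite !mxE mulr_suml.
by apply: eq_bigr => i _; rewrite mulrAC mulrC.
Qed.

Lemma norm_sum_spectral_diag_le (S : {pred 'I_n}) :
  `|\sum_(k in S) D 0 k| <= \sum_i (\sum_j A i j) * spectral_weight S i.
Proof.
pose c i j := \sum_(k in S) P k i * (P k j)^*.
have sum_D : \sum_(k in S) D 0 k = \sum_i \sum_j A i j * c i j.
  under eq_bigr do rewrite spectral_diag_coord.
  rewrite exchange_big; apply: eq_bigr => i _ /=.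
  by rewrite exchange_big; apply: eq_bigr => j _; rewrite mulr_sumr.
have sum_weights : (\sum_i (\sum_j A i j) * spectral_weight S i) *+ 2 =
    \sum_i \sum_j A i j * (spectral_weight S i + spectral_weight S j).
  under [RHS]eq_bigr do under eq_bigr do rewrite mulrDr.
  under [RHS]eq_bigr do rewrite big_split /=.
  rewrite big_split /= mulr2n; congr (_ + _).
    by apply: eq_bigr => i _; rewrite mulr_suml.
  rewrite exchange_big; apply: eq_bigr => i _ /=; rewrite mulr_suml.
  by apply: eq_bigr => j _; rewrite nonneg_hermitian_sym.
rewrite -(@ler_pMn2r _ 2) // sum_D sum_weights.
apply: le_trans (ler_wMn2r 2 (ler_norm_sum _ _ _)) _; rewrite -sumrMnl.
apply: ler_sum => i _; apply: le_trans (ler_wMn2r 2 (ler_norm_sum _ _ _)) _.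
rewrite -sumrMnl; apply: ler_sum => j _; rewrite normrM ger0_norm // -mulrnAr.
by rewrite ler_wpM2l //; exact: norm_sum_mul_conj_le.
Qed.

Lemma spectral_weight_ge0 S i : 0 <= spectral_weight S i.
Proof. by apply: sumr_ge0 => k _; rewrite exprn_ge0. Qed.

Lemma spectral_weight_le1 S i : spectral_weight S i <= 1.
Proof.
have col_norm1 : \sum_k `|P k i| ^+ 2 = 1.
  have /unitarymxP/mulmx1C/matrixP/(_ i i) := spectral_unitarymx A.
  rewrite !mxE eqxx mulr1n => <-.
  by apply: eq_bigr => k _; rewrite !mxE normCKC.
rewrite -col_norm1 [leRHS](bigID (mem S)) /= lerDl.
by apply: sumr_ge0 => k _; rewrite exprn_ge0.
Qed.

Lemma sum_spectral_weight S : \sum_i spectral_weight S i = #|S|%:R.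
Proof.
rewrite exchange_big /= -sumr_const; apply: eq_bigr => k _.
have /unitarymxP/matrixP/(_ k k) := spectral_unitarymx A.
rewrite !mxE eqxx mulr1n => <-.
by apply: eq_bigr => i _; rewrite !mxE normCK.
Qed.

Lemma norm_sum_spectral_diag_le_sum_top (S : {pred 'I_n}) (f : 'I_n -> nat) :
    (forall i, \sum_j A i j = (f i)%:R) ->
  `|\sum_(k in S) D 0 k| <= (sumn (take #|S| (sort geq [seq f i | i <- enum 'I_n])))%:R.
Proof.
move=> row_sum; apply: le_trans (norm_sum_spectral_diag_le S) _.
under eq_bigr do rewrite row_sum.
apply: sum_weighted_le_sum_top; last exact: max_card.
  by move=> i; rewrite spectral_weight_ge0 spectral_weight_le1.
exact: sum_spectral_weight.
Qed.

End NonnegHermitian.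

Lemma sum_norm_real_zero_sum (R : numDomainType) (I : finType) (F : I -> R) :
    (forall i, F i \is Num.real) -> \sum_i F i = 0 ->
  \sum_i `|F i| = (\sum_(i | 0 < F i) F i) *+ 2 /\
  \sum_i `|F i| = (- \sum_(i | F i < 0) F i) *+ 2.
Proof.
move=> F_real sum_F0.
set p := \sum_(i | 0 < F i) F i; set m := \sum_(i | F i < 0) F i.
have sum_F : \sum_i F i = p + m.
  rewrite /p /m !(big_mkcond (fun i => _ < _)) -big_split /=.
  apply: eq_bigr => i _.
  by case: (real_ltgtP (F_real i) (real0 R)) => [_|_|->]; rewrite ?add0r ?addr0.
have sum_norm : \sum_i `|F i| = p - m.
  rewrite /p /m !(big_mkcond (fun i => _ < _)) -sumrB /=.
  apply: eq_bigr => i _.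
  case: (real_ltgtP (F_real i) (real0 R)) => [F_neg|F_pos|->].
  - by rewrite ltr0_norm // sub0r.
  - by rewrite gtr0_norm // subr0.
  - by rewrite normr0 subr0.
have m_eq : m = - p by apply/eqP; rewrite -addr_eq0 addrC -sum_F sum_F0.
by rewrite sum_norm m_eq opprK mulr2n; split.
Qed.

Section AdjacencySpectrum.

Variables (n : nat) (e : rel 'I_n).
Hypothesis e_simple : simple_graph e.

Local Notation D := (spectral_diag (adjmx e)).

Lemma adjmx_hermsym : adjmx e \is hermsymmx.
Proof.
apply/is_hermitianmxP; rewrite expr0 scale1r; apply/matrixP => i j.
by rewrite !mxE conjC_nat (proj1 e_simple).
Qed.

Lemma adjmx_ge0 i j : 0 <= adjmx e i j.
Proof. by rewrite mxE ler0n. Qed.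

Lemma adjmx_row_sum i : \sum_j adjmx e i j = (deg e i)%:R.
Proof.
rewrite /deg -sum1_card natr_sum [RHS]big_mkcond /=; apply: eq_bigr => j _.
by rewrite !mxE inE; case: (e i j).
Qed.

Lemma mxtrace_adjmx : \tr (adjmx e) = 0.
Proof. by apply: big1 => i _; rewrite mxE (proj2 e_simple i). Qed.

Lemma perm_eq_spectrum : perm_eq (spectrum e) [seq D 0 k | k <- enum 'I_n].
Proof.
rewrite /spectrum; case: closed_field_poly_normal => r /=.
rewrite (monicP (char_poly_monic _)) scale1r char_poly_spectral ?adjmx_hermsym //.
move=> sp_r.
apply: prod_XsubC_eq; rewrite -sp_r big_map big_enum /=.
by apply: eq_bigl => k; rewrite inE.
Qed.

Lemma energyE : energy e = \sum_k `|D 0 k|.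
Proof. by rewrite /energy (perm_big _ perm_eq_spectrum) big_map big_enum. Qed.

Lemma count_spectrum (p : pred algC) : count p (spectrum e) = #|[pred k | p (D 0 k)]|.
Proof.
rewrite (permP perm_eq_spectrum) count_map -sum1_count -sum1_card.
by rewrite big_enum_cond.
Qed.

Lemma norm_sum_spectral_adjmx_le_top_degrees (S : {pred 'I_n}) :
  `|\sum_(k in S) D 0 k| <= (sum_top_degrees e #|S|)%:R.
Proof.
apply: norm_sum_spectral_diag_le_sum_top adjmx_row_sum.
  exact: adjmx_hermsym.
exact: adjmx_ge0.
Qed.

End AdjacencySpectrum.

Theorem mainTheorem13 (n : nat) (e : rel 'I_n) :
  simple_graph e ->
  energy e <= 2 * (sum_top_degrees e (minn (nu_pos e) (nu_neg e)))%:R.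
Proof.
move=> e_simple; set D := spectral_diag (adjmx e).
have D_real k : D 0 k \is Num.real by apply: spectral_diag_real; exact: adjmx_hermsym.
have sum_D0 : \sum_k D 0 k = 0.
  by rewrite sum_spectral_diag ?mxtrace_adjmx //; exact: adjmx_hermsym.
have [energy_pos energy_neg] := sum_norm_real_zero_sum D_real sum_D0.
rewrite (energyE e_simple) /nu_pos /nu_neg !(count_spectrum e_simple) mulr_natl.
rewrite /minn; case: ifP => _; [rewrite energy_pos | rewrite energy_neg].
all: apply: ler_wMn2r.
all: apply: le_trans (norm_sum_spectral_adjmx_le_top_degrees e_simple _).
- by rewrite real_ler_norm // rpred_sum.
- by rewrite -normrN real_ler_norm // rpredN rpred_sum.
Qed.
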